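(* Let $f_{s_1d}, f_{s_1r}, f_{rd}, g_{rd}^{s_1}, g_{s_1d}^{r}\in[0,1]$ satisfy $0\le g_{s_1d}^{r}\le f_{s_1d}$, $0\le g_{rd}^{s_1}< f_{rd}$, set $T_1=(1-f_{s_1d})f_{s_1r}$, and assume $T_1+f_{s_1d}>0$ and $T_1+g_{rd}^{s_1}>0$. For $\beta\in[0,1]$ define $$\mu_1^{\mathrm{SBC}}(\beta)=(1-\beta)(f_{s_1d}+T_1)+\beta\,g_{s_1d}^{r},\qquad \mu_{u_1}^{\mathrm{SBC}}(\beta)=\frac{f_{rd}}{(1-\beta)T_1+f_{rd}-\beta\,g_{rd}^{s_1}}\,\mu_1^{\mathrm{SBC}}(\beta).$$ If $$f_{rd}-g_{rd}^{s_1}\le \frac{g_{s_1d}^{r}(T_1+f_{rd})}{T_1+f_{s_1d}},$$ then $$\max_{0\le\beta\le 1}\min\{\mu_1^{\mathrm{SBC}}(\beta),\mu_{u_1}^{\mathrm{SBC}}(\beta)\}=\Big(1-\frac{T_1}{T_1+g_{rd}^{s_1}}\Big)(f_{s_1d}+T_1)+\frac{T_1}{T_1+g_{rd}^{s_1}}\,g_{s_1d}^{r},$$ attained at $\beta^*=T_1/(T_1+g_{rd}^{s_1})$.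
   Context: $f_{mn}$ denotes the probability that link $(m,n)$ is not in outage and $g_{mn}^{I}$ the probability that it is not in outage under simultaneous interference from node $I$ (so $g_{mn}^I\le f_{mn}$). This is the optimization of the maximal stable throughput of a single source $s_1$ in the sensing-based cooperative scheme over the probability $\beta$ that the relay transmits during a busy slot. *)

From Stdlib Require Import Reals Lra.
Open Scope R_scope.

Definition T1 (fs1d fs1r : R) : R := (1 - fs1d) * fs1r.

Definition mu1 (fs1d fs1r gs1dr beta : R) : R :=
  (1 - beta) * (fs1d + T1 fs1d fs1r) + beta * gs1dr.

Definition muu1 (fs1d fs1r frd grds1 gs1dr beta : R) : R :=
  frd / ((1 - beta) * T1 fs1d fs1r + frd - beta * grds1)
  * mu1 fs1d fs1r gs1dr beta.

Definition obj (fs1d fs1r frd grds1 gs1dr beta : R) : R :=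
  Rmin (mu1 fs1d fs1r gs1dr beta) (muu1 fs1d fs1r frd grds1 gs1dr beta).

From Stdlib Require Import Reals Lra Psatz.
Open Scope R_scope.

(* Write T = T_1, A = f_{s1d} + T and D(beta) = (1 - beta) T + f_{rd} - beta g_{rd}.
   Then mu_1 = A - beta (A - g_{s1d}) is nonincreasing, D stays positive on [0,1],
   and mu_{u1} = f_{rd} mu_1 / D is a linear-fractional function of beta whose
   monotonicity is governed by the sign of a 2x2 determinant; the hypothesis of
   the theorem says exactly that this determinant makes mu_{u1} nondecreasing.
   The two curves meet where D = f_{rd}, i.e. at b = T / (T + g_{rd}); left of b
   the minimum is at most mu_{u1} <= mu_{u1}(b), right of b it is at most
   mu_1 <= mu_1(b). *)

Lemma linear_fractional_le (p q r s x y : R) :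
  q * r <= p * s -> x <= y -> 0 < r - s * x -> 0 < r - s * y ->
  (p - q * x) / (r - s * x) <= (p - q * y) / (r - s * y).
Proof.
  intros Hdet Hxy Hx Hy.
  apply (Rmult_le_reg_r ((r - s * x) * (r - s * y))); [nra|].
  replace ((p - q * x) / (r - s * x) * ((r - s * x) * (r - s * y)))
    with ((p - q * x) * (r - s * y)) by (field; lra).
  replace ((p - q * y) / (r - s * y) * ((r - s * x) * (r - s * y)))
    with ((p - q * y) * (r - s * x)) by (field; lra).
  nra.
Qed.

Lemma T1_ge0 (fs1d fs1r : R) : fs1d <= 1 -> 0 <= fs1r -> 0 <= T1 fs1d fs1r.
Proof. intros; unfold T1; nra. Qed.

Section SensingBasedCooperation.

Variables fs1d fs1r frd grds1 gs1dr : R.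

Let T := T1 fs1d fs1r.

Lemma mu1_nonincreasing (x y : R) :
  gs1dr <= fs1d + T -> x <= y -> mu1 fs1d fs1r gs1dr y <= mu1 fs1d fs1r gs1dr x.
Proof. intros; unfold mu1; fold T; nra. Qed.

Lemma muu1_den_pos (beta : R) :
  0 <= T -> 0 <= grds1 < frd -> 0 <= beta <= 1 ->
  0 < (1 - beta) * T + frd - beta * grds1.
Proof. intros; nra. Qed.

Lemma muu1_linear_fractional (beta : R) :
  0 < (1 - beta) * T + frd - beta * grds1 ->
  muu1 fs1d fs1r frd grds1 gs1dr beta
  = frd * (((fs1d + T) - (fs1d + T - gs1dr) * beta)
           / ((T + frd) - (T + grds1) * beta)).
Proof. intros; unfold muu1, mu1; fold T; field; lra. Qed.

Lemma muu1_nondecreasing (x y : R) :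
  0 <= T -> 0 <= grds1 < frd -> 0 <= x -> x <= y -> y <= 1 ->
  (fs1d + T) * (frd - grds1) <= gs1dr * (T + frd) ->
  muu1 fs1d fs1r frd grds1 gs1dr x <= muu1 fs1d fs1r frd grds1 gs1dr y.
Proof.
  intros HT Hg Hx Hxy Hy Hdet.
  assert (Dx : 0 < (1 - x) * T + frd - x * grds1) by (apply muu1_den_pos; lra).
  assert (Dy : 0 < (1 - y) * T + frd - y * grds1) by (apply muu1_den_pos; lra).
  rewrite (muu1_linear_fractional x Dx), (muu1_linear_fractional y Dy).
  apply Rmult_le_compat_l; [lra|].
  apply linear_fractional_le; lra.
Qed.

Lemma muu1_eq_mu1_at_crossing (beta : R) :
  0 < frd -> beta * (T + grds1) = T ->
  muu1 fs1d fs1r frd grds1 gs1dr beta = mu1 fs1d fs1r gs1dr beta.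
Proof.
  intros Hf Hb; unfold muu1.
  replace ((1 - beta) * T1 fs1d fs1r + frd - beta * grds1) with frd
    by (fold T; lra).
  field; lra.
Qed.

End SensingBasedCooperation.

Theorem lemma1 (fs1d fs1r frd grds1 gs1dr : R) :
  0 <= fs1d <= 1 -> 0 <= fs1r <= 1 -> 0 <= frd <= 1 ->
  0 <= grds1 <= 1 -> 0 <= gs1dr <= 1 ->
  0 <= gs1dr <= fs1d ->
  0 <= grds1 < frd ->
  T1 fs1d fs1r + fs1d > 0 ->
  T1 fs1d fs1r + grds1 > 0 ->
  frd - grds1 <=
    gs1dr * (T1 fs1d fs1r + frd) / (T1 fs1d fs1r + fs1d) ->
  let bstar := T1 fs1d fs1r / (T1 fs1d fs1r + grds1) in
  let v := (1 - bstar) * (fs1d + T1 fs1d fs1r) + bstar * gs1dr in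
  (0 <= bstar <= 1 /\
   obj fs1d fs1r frd grds1 gs1dr bstar = v /\
   (forall beta, 0 <= beta <= 1 -> obj fs1d fs1r frd grds1 gs1dr beta <= v)).
Proof.
  intros Hfs1d Hfs1r _ _ _ Hgs1dr Hgrd HA Hs Hcond bstar v.
  assert (HT : 0 <= T1 fs1d fs1r) by (apply T1_ge0; lra).
  set (T := T1 fs1d fs1r) in *.
  assert (Hdet : (fs1d + T) * (frd - grds1) <= gs1dr * (T + frd)).
  { replace (gs1dr * (T + frd)) with
      (gs1dr * (T + frd) / (T + fs1d) * (T + fs1d)) by (field; lra).
    nra. }
  assert (Hcross : bstar * (T + grds1) = T) by (unfold bstar; field; lra).
  assert (Hbstar : 0 <= bstar <= 1) by nra.
  assert (Hv : mu1 fs1d fs1r gs1dr bstar = v) by reflexivity.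
  assert (Hmeet : muu1 fs1d fs1r frd grds1 gs1dr bstar = mu1 fs1d fs1r gs1dr bstar)
    by (apply muu1_eq_mu1_at_crossing; [lra | exact Hcross]).
  split; [exact Hbstar | split].
  - unfold obj; rewrite Hmeet, Rmin_left; lra.
  - intros beta Hbeta; unfold obj.
    destruct (Rle_lt_dec beta bstar) as [Hle | Hgt].
    + eapply Rle_trans; [apply Rmin_r|].
      rewrite <- Hv, <- Hmeet.
      apply muu1_nondecreasing; fold T; lra.
    + eapply Rle_trans; [apply Rmin_l|].
      rewrite <- Hv; apply mu1_nonincreasing; fold T; lra.
Qed.
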